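(* Let $a\geq b>0$, $k\geq 1$ and $t>0$. Then \[ \frac{ka\gamma-b\gamma}{k}+\frac{b}{k}\ln k + \frac{a-b}{t}+a\psi(t)-b\psi_k(t)\geq 0 . \]
   Context: $\gamma$ denotes the Euler–Mascheroni constant and $\psi(t)=\Gamma'(t)/\Gamma(t)$ is the digamma function for $t>0$, where $\Gamma$ is Euler's Gamma function. For $k>0$ and $t>0$, the $k$-Gamma function is $\Gamma_k(t)=\int_0^\infty e^{-x^k/k}x^{t-1}\,dx$, and $\psi_k(t)=\frac{d}{dt}\ln\Gamma_k(t)=\Gamma_k'(t)/\Gamma_k(t)$. *)

From Stdlib Require Import Reals.
From Coquelicot Require Import Coquelicot.
Open Scope R_scope.

Definition euler_gamma : R :=
  real (Lim_seq (fun n : nat => sum_n_m (fun j : nat => / INR j) 1 n - ln (INR n))).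

Definition Gamma (t : R) : R :=
  RInt_gen (fun x => exp (- x) * Rpower x (t - 1)) (at_right 0) (Rbar_locally p_infty).

Definition digamma (t : R) : R := Derive Gamma t / Gamma t.

Definition Gamma_k (k t : R) : R :=
  RInt_gen (fun x => exp (- (Rpower x k) / k) * Rpower x (t - 1))
    (at_right 0) (Rbar_locally p_infty).

Definition psi_k (k t : R) : R := Derive (fun s => ln (Gamma_k k s)) t.

From Stdlib Require Import Reals Lra Lia Psatz FunctionalExtensionality.
From Coquelicot Require Import Coquelicot.
Open Scope R_scope.

(* The change of variables y = x^k / k gives Gamma_k(t) = k^(t/k - 1) Gamma(t/k), hence
   psi_k(t) = (ln k + psi(t/k)) / k.  The recurrence Gamma(s+1) = s Gamma(s) gives
   psi(s+1) = psi(s) + 1/s, and with psi(n) <= ln n <= psi(n+1) also gamma = - psi(1).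
   The left-hand side thus equals a (psi(t+1) - psi(1)) - (b/k) (psi(t/k+1) - psi(1)),
   which is nonnegative because t/k <= t, b/k <= a and psi is nondecreasing: Gamma is
   log-convex, since Gamma'' Gamma >= Gamma'^2 by Cauchy-Schwarz.  The derivatives of Gamma
   are obtained by differentiating under the integral sign, using
   |e^z - 1 - z| <= z^2 e^|z|. *)

Local Notation at_0 := (at_right 0).
Local Notation at_oo := (Rbar_locally p_infty).

Lemma ball_R_Rabs (x e y : R) : ball x e y <-> Rabs (y - x) < e.
Proof. unfold ball; simpl; unfold AbsRing_ball, abs, minus, plus, opp; simpl; tauto. Qed.

Lemma at_right_0_interval d : 0 < d -> at_0 (fun x => 0 < x < d).
Proof.
  intros Hd; exists (mkposreal d Hd); intros y Hy Hy0.
  change (Rabs (y - 0) < d) in Hy; apply Rabs_def2 in Hy; lra.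
Qed.

Lemma at_right_0_elim (P : R -> Prop) :
  at_0 P -> exists d, 0 < d /\ forall x, 0 < x < d -> P x.
Proof.
  intros [e He]; exists e; split; [apply cond_pos|].
  intros x Hx; apply He; [|lra].
  apply ball_R_Rabs; rewrite Rminus_0_r, Rabs_pos_eq; lra.
Qed.

Lemma eventually_0_1_oo : filter_prod at_0 at_oo (fun ab => 0 < fst ab < 1 /\ 1 < snd ab).
Proof.
  apply Filter_prod with (fun a => 0 < a < 1) (fun b => 1 < b); [|now exists 1|auto].
  apply at_right_0_interval; lra.
Qed.

Lemma Rmin_pos_le a b x : 0 < a -> 0 < b -> Rmin a b <= x -> 0 < x.
Proof. intros Ha Hb H; apply Rlt_le_trans with (2 := H); now apply Rmin_glb_lt. Qed.

Lemma ex_derive_continuous_R (f : R -> R) x : ex_derive f x -> continuous f x.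
Proof. apply (ex_derive_continuous (V := R_NormedModule)). Qed.

Lemma exp_le_mono x y : x <= y -> exp x <= exp y.
Proof. intros [H|<-]; [left; now apply exp_increasing | lra]. Qed.

Lemma RInt_gen_abs_le (f g : R -> R) lf lg :
  (forall x, 0 < x -> Rabs (f x) <= g x) ->
  is_RInt_gen f at_0 at_oo lf -> is_RInt_gen g at_0 at_oo lg -> Rabs lf <= lg.
Proof.
  intros Hfg; apply (RInt_gen_norm f g).
  - eapply filter_imp; [|exact eventually_0_1_oo]; simpl; intros; lra.
  - eapply filter_imp; [|exact eventually_0_1_oo]; simpl.
    intros [a b] Hab x Hx; simpl in *; apply Hfg; lra.
Qed.

Lemma is_RInt_gen_ge0 (g : R -> R) lg :
  (forall x, 0 < x -> 0 <= g x) -> is_RInt_gen g at_0 at_oo lg -> 0 <= lg.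
Proof.
  intros Hg Hl.
  assert (Habs : Rabs lg <= lg).
  { apply (RInt_gen_abs_le g g); auto; intros x Hx; rewrite Rabs_pos_eq; auto; lra. }
  pose proof (Rle_abs (- lg)); rewrite Rabs_Ropp in *; lra.
Qed.

Section ContinuousOnPositiveReals.

Variable f : R -> R.
Hypothesis f_cont : forall x, 0 < x -> continuous f x.

Lemma ex_RInt_pos a b : 0 < a -> 0 < b -> ex_RInt f a b.
Proof.
  intros Ha Hb; apply (ex_RInt_continuous (V := R_CompleteNormedModule)).
  intros x [Hx _]; apply f_cont; exact (Rmin_pos_le a b x Ha Hb Hx).
Qed.

Hypothesis f_ge0 : forall x, 0 < x -> 0 <= f x.

Lemma RInt_le_RInt_wider a b a' b' :
  0 < a' -> a' <= a -> a <= b -> b <= b' -> RInt f a b <= RInt f a' b'.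
Proof.
  intros H1 H2 H3 H4.
  rewrite <- (RInt_Chasles f a' a b'), <- (RInt_Chasles f a b b');
    try (apply ex_RInt_pos; lra).
  assert (Hge0 : forall u v, 0 < u -> u <= v -> 0 <= RInt f u v).
  { intros u v Hu Huv; apply RInt_ge_0; [easy | apply ex_RInt_pos; lra | intros; apply f_ge0; lra]. }
  pose proof (Hge0 a' a H1 H2); pose proof (Hge0 b b' ltac:(lra) H4).
  unfold plus; simpl; lra.
Qed.

(* The partial integrals increase as [a] decreases and [b] increases, so their supremum is the limit. *)
Lemma ex_RInt_gen_bounded M :
  (forall a b, 0 < a -> a <= b -> RInt f a b <= M) -> ex_RInt_gen f at_0 at_oo.
Proof.
  intros HM.
  set (E := fun z => exists a b, 0 < a <= b /\ z = RInt f a b).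
  destruct (completeness E) as [S [HS1 HS2]].
  { exists M; intros z (a & b & Hab & ->); apply HM; lra. }
  { exists (RInt f 1 1), 1, 1; split; [lra|easy]. }
  exists S; intros P [eps HP].
  assert (Happrox : exists a0 b0, 0 < a0 <= b0 /\ S - eps < RInt f a0 b0).
  { apply Classical_Prop.NNPP; intros Hno.
    assert (S <= S - eps); [|destruct eps; simpl in *; lra].
    apply HS2; intros z (a & b & Hab & ->); apply Rnot_lt_le; intros Hlt.
    apply Hno; now exists a, b. }
  destruct Happrox as (a0 & b0 & Hab0 & Hlt).
  apply Filter_prod with (fun a => 0 < a < a0) (fun b => b0 < b);
    [apply at_right_0_interval; lra | now exists b0 |].
  intros a b Ha Hb; exists (RInt f a b); split.
  - apply (RInt_correct (V := R_CompleteNormedModule)), ex_RInt_pos; lra.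
  - apply HP, ball_R_Rabs.
    assert (RInt f a b <= S) by (apply HS1; exists a, b; split; [lra|easy]).
    assert (RInt f a0 b0 <= RInt f a b) by (apply RInt_le_RInt_wider; lra).
    apply Rabs_def1; lra.
Qed.

Lemma RInt_le_RInt_gen l a b :
  is_RInt_gen f at_0 at_oo l -> 0 < a -> a <= b -> RInt f a b <= l.
Proof.
  intros Hl Ha Hab; apply Rnot_lt_le; intros Hlt.
  assert (Hpos : 0 < RInt f a b - l) by lra.
  destruct (Hl (ball l (mkposreal _ Hpos))) as [Q Q' HQ [M HM] HQQ'];
    [apply locally_ball|].
  destruct (at_right_0_elim _ HQ) as (d & Hd & HQd).
  set (a' := Rmin a d / 2); set (b' := Rmax b M + 1).
  assert (0 < Rmin a d) by (now apply Rmin_glb_lt).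
  pose proof (Rmin_l a d); pose proof (Rmin_r a d).
  pose proof (Rmax_l b M); pose proof (Rmax_r b M).
  destruct (HQQ' a' b') as (y & Hy & Hball);
    [apply HQd; unfold a'; lra | apply HM; unfold b'; lra|].
  apply (is_RInt_unique (V := R_CompleteNormedModule)) in Hy; subst y.
  apply ball_R_Rabs, Rabs_def2 in Hball; unfold minus, plus, opp in Hball; simpl in Hball.
  assert (RInt f a b <= RInt f a' b') by (apply RInt_le_RInt_wider; unfold a', b'; lra).
  lra.
Qed.

End ContinuousOnPositiveReals.

Lemma ex_RInt_gen_dominated (f g : R -> R) :
  (forall x, 0 < x -> continuous f x) -> (forall x, 0 < x -> continuous g x) ->
  (forall x, 0 < x -> Rabs (f x) <= g x) ->
  ex_RInt_gen g at_0 at_oo -> ex_RInt_gen f at_0 at_oo.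
Proof.
  intros Hf Hg Hfg [lg Hlg].
  assert (Hbnd : forall x, 0 < x -> 0 <= f x + g x <= 2 * g x).
  { intros x Hx; specialize (Hfg x Hx); apply Rabs_le_between in Hfg; lra. }
  assert (Hsum_cont : forall x, 0 < x -> continuous (fun x => f x + g x) x)
    by (intros; apply (continuous_plus f g); auto).
  assert (Hsum : ex_RInt_gen (fun x => f x + g x) at_0 at_oo).
  { apply ex_RInt_gen_bounded with (M := 2 * lg); auto; [intros; apply Hbnd; auto|].
    intros a b Ha Hab.
    assert (RInt g a b <= lg)
      by (apply (RInt_le_RInt_gen g); auto; intros x Hx; specialize (Hbnd x Hx); lra).
    apply Rle_trans with (RInt (fun x => 2 * g x) a b).
    - apply RInt_le; try apply ex_RInt_pos; auto; try lra.
      + intros; apply (continuous_scal_r 2 g); auto.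
      + intros x Hx; apply Hbnd; lra.
    - assert (E : RInt (fun x => 2 * g x) a b = 2 * RInt g a b)
        by (apply (RInt_scal g a b 2), ex_RInt_pos; auto; lra).
      lra. }
  destruct Hsum as [lh Hlh]; exists (minus lh lg).
  apply (is_RInt_gen_ext (fun y => minus (f y + g y) (g y))).
  - apply filter_forall; intros; unfold minus, plus, opp; simpl; ring.
  - exact (is_RInt_gen_minus _ _ _ _ Hlh Hlg).
Qed.

Lemma pow_le_exp_mult n d t : 0 < d -> 0 <= t -> t ^ n <= (INR n / d) ^ n * exp (d * t).
Proof.
  intros Hd Ht; destruct n as [|n].
  - simpl; rewrite Rmult_1_l, <- exp_0; apply exp_le_mono; nra.
  - assert (Hn : 0 < INR (S n)) by apply lt_0_INR, Nat.lt_0_succ.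
    set (u := d * t / INR (S n)).
    assert (Hu : 0 <= u) by (unfold u; apply Rdiv_le_0_compat; nra).
    assert (Hpow : u ^ S n <= exp u ^ S n).
    { apply pow_incr; split; [easy|]; pose proof (exp_ineq1_le u); lra. }
    replace (t ^ S n) with ((INR (S n) / d) ^ S n * u ^ S n)
      by (unfold u; rewrite <- Rpow_mult_distr; f_equal; field; lra).
    replace (d * t) with (INR (S n) * u) by (unfold u; field; lra).
    rewrite <- (Rpower_pow (S n) (exp u)) in Hpow by apply exp_pos.
    unfold Rpower in Hpow; rewrite ln_exp in Hpow.
    apply Rmult_le_compat_l; [apply pow_le, Rdiv_le_0_compat; lra | easy].
Qed.

Lemma exp_Rabs_le z : exp (Rabs z) <= exp z + exp (- z).
Proof.
  pose proof (exp_pos z); pose proof (exp_pos (- z)).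
  destruct (Rle_or_lt 0 z); [rewrite Rabs_pos_eq | rewrite Rabs_left]; lra.
Qed.

Lemma exp_sub_taylor1_le z : Rabs (exp z - 1 - z) <= z ^ 2 * exp (Rabs z).
Proof.
  pose proof (exp_ineq1_le z); pose proof (exp_ineq1_le (- z)); pose proof (exp_pos z).
  assert (Hinv : exp z * exp (- z) = 1) by (rewrite <- exp_plus, Rplus_opp_r; apply exp_0).
  rewrite Rabs_pos_eq by lra.
  destruct (Rle_or_lt 0 z) as [Hz|Hz].
  - rewrite Rabs_pos_eq by lra.
    assert (exp z - 1 <= z * exp z) by nra.
    nra.
  - rewrite Rabs_left by lra.
    assert (exp z * (1 - z) <= 1) by nra.
    assert (exp z <= 1 + z + z ^ 2) by nra.
    assert (z ^ 2 <= z ^ 2 * exp (- z)) by nra.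
    lra.
Qed.

Definition gamma_kernel (s x : R) : R := exp (- x) * Rpower x (s - 1).

Lemma gamma_kernel_pos s x : 0 < gamma_kernel s x.
Proof. apply Rmult_lt_0_compat; apply exp_pos. Qed.

Lemma gamma_kernel_continuous s x : 0 < x -> continuous (gamma_kernel s) x.
Proof. intros Hx; apply ex_derive_continuous_R; unfold gamma_kernel, Rpower; auto_derive; lra. Qed.

Lemma gamma_kernel_mult_Rpower s c x :
  0 < x -> gamma_kernel s x * Rpower x c = gamma_kernel (s + c) x.
Proof.
  intros Hx; unfold gamma_kernel, Rpower.
  replace ((s + c - 1) * ln x) with ((s - 1) * ln x + c * ln x) by ring.
  rewrite exp_plus; ring.
Qed.

Lemma gamma_kernel_le_Rpower s x : 0 <= x -> gamma_kernel s x <= Rpower x (s - 1).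
Proof.
  intros Hx; unfold gamma_kernel.
  assert (exp (- x) <= 1) by (rewrite <- exp_0; apply exp_le_mono; lra).
  pose proof (exp_pos (- x)); pose proof (exp_pos ((s - 1) * ln x)); unfold Rpower; nra.
Qed.

(* [exp (-x) x^(s+1)] is maximal at [x = s + 1]. *)
Lemma gamma_kernel_le_inv_sqr s x :
  0 < x -> 0 < s + 1 -> gamma_kernel s x <= Rpower (s + 1) (s + 1) / x ^ 2.
Proof.
  intros Hx Hs.
  assert (Hx2 : 0 < x ^ 2) by nra.
  apply (Rmult_le_reg_r (x ^ 2)); [easy|].
  unfold Rdiv; rewrite Rmult_assoc, Rinv_l, Rmult_1_r by lra.
  replace (x ^ 2) with (Rpower x 2) by (rewrite <- Rpower_pow by easy; f_equal; simpl; ring).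
  rewrite gamma_kernel_mult_Rpower by easy; unfold gamma_kernel, Rpower.
  rewrite <- exp_plus; apply exp_le_mono.
  pose proof (exp_ineq1_le (ln (x / (s + 1)))) as Hln.
  rewrite exp_ln, ln_div in Hln by (try apply Rdiv_lt_0_compat; lra).
  replace (s + 2 - 1) with (s + 1) by ring.
  assert ((s + 1) * (ln x - ln (s + 1)) <= (s + 1) * (x / (s + 1) - 1))
    by (apply Rmult_le_compat_l; lra).
  replace ((s + 1) * (x / (s + 1) - 1)) with (x - (s + 1)) in H by (field; lra).
  lra.
Qed.

Lemma RInt_pos_derive (F f : R -> R) a b :
  0 < a -> 0 < b -> (forall x, 0 < x -> is_derive F x (f x)) ->
  (forall x, 0 < x -> continuous f x) -> RInt f a b = F b - F a.
Proof.
  intros Ha Hb HF Hf; apply (is_RInt_unique (V := R_CompleteNormedModule)).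
  apply (is_RInt_derive (V := R_CompleteNormedModule) F f);
    intros x [Hx _]; [apply HF | apply Hf]; exact (Rmin_pos_le a b x Ha Hb Hx).
Qed.

Lemma Rpower_continuous c x : 0 < x -> continuous (fun y => Rpower y c) x.
Proof. intros Hx; apply ex_derive_continuous_R; unfold Rpower; auto_derive; lra. Qed.

Lemma RInt_Rpower s a b : 0 < a -> 0 < b -> s <> 0 ->
  RInt (fun x => Rpower x (s - 1)) a b = (Rpower b s - Rpower a s) / s.
Proof.
  intros Ha Hb Hs.
  rewrite (RInt_pos_derive (fun x => Rpower x s / s)); [simpl; field; easy | easy | easy | |].
  - intros x Hx; apply is_derive_Reals.
    replace (Rpower x (s - 1)) with (s * Rpower x (s - 1) * / s) by (field; easy).
    apply (derivable_pt_lim_scal_right (fun y => Rpower y s)), derivable_pt_lim_power, Hx.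
  - intros; apply Rpower_continuous; easy.
Qed.

Lemma inv_sqr_continuous x : 0 < x -> continuous (fun y => / y ^ 2) x.
Proof. intros Hx; apply ex_derive_continuous_R; auto_derive; intro; nra. Qed.

Lemma RInt_inv_sqr a b : 0 < a -> 0 < b -> RInt (fun x => / x ^ 2) a b = / a - / b.
Proof.
  intros Ha Hb.
  rewrite (RInt_pos_derive (fun x => - / x)); [simpl; ring | easy | easy | |].
  - intros x Hx; auto_derive; [lra | field; lra].
  - exact inv_sqr_continuous.
Qed.

Lemma ex_RInt_gen_gamma_kernel s : 0 < s -> ex_RInt_gen (gamma_kernel s) at_0 at_oo.
Proof.
  intros Hs; set (K := Rpower (s + 1) (s + 1)).
  assert (HK : 0 < K) by apply exp_pos.
  assert (Hcont := gamma_kernel_continuous s).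
  assert (Hint : forall u v, 0 < u -> 0 < v -> ex_RInt (gamma_kernel s) u v)
    by (intros; apply ex_RInt_pos; auto).
  apply ex_RInt_gen_bounded with (M := 1 / s + K); auto;
    [intros; left; apply gamma_kernel_pos|].
  intros a b Ha Hab.
  assert (0 < Rmin a 1) by (apply Rmin_glb_lt; lra).
  pose proof (Rmin_l a 1); pose proof (Rmin_r a 1); pose proof (Rmax_l b 1); pose proof (Rmax_r b 1).
  set (a' := Rmin a 1) in *; set (b' := Rmax b 1) in *.
  apply Rle_trans with (RInt (gamma_kernel s) a' b');
    [apply RInt_le_RInt_wider; auto; try (intros; left; apply gamma_kernel_pos); lra|].
  rewrite <- (RInt_Chasles (gamma_kernel s) a' 1 b') by (apply Hint; lra).
  assert (RInt (gamma_kernel s) a' 1 <= 1 / s).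
  { apply Rle_trans with (RInt (fun x => Rpower x (s - 1)) a' 1).
    - apply RInt_le; [lra | apply Hint; lra | |].
      + apply ex_RInt_pos; [intros; apply Rpower_continuous|..]; lra.
      intros x Hx; apply gamma_kernel_le_Rpower; lra.
    - rewrite RInt_Rpower by lra; unfold Rpower at 1; rewrite ln_1, Rmult_0_r, exp_0.
      assert (0 < Rpower a' s) by apply exp_pos.
      apply Rmult_le_compat_r; [left; apply Rinv_0_lt_compat|]; lra. }
  assert (RInt (gamma_kernel s) 1 b' <= K).
  { apply Rle_trans with (RInt (fun x => K * / x ^ 2) 1 b').
    - apply RInt_le; [lra | apply Hint; lra | apply ex_RInt_pos; try lra |].
      + intros x Hx; apply (continuous_scal_r K (fun y => / y ^ 2)), inv_sqr_continuous, Hx.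
      + intros x Hx; apply gamma_kernel_le_inv_sqr; lra.
    - assert (E : RInt (fun x => K * / x ^ 2) 1 b' = K * RInt (fun x => / x ^ 2) 1 b').
      { apply (RInt_scal (fun x => / x ^ 2) 1 b' K), ex_RInt_pos; [exact inv_sqr_continuous | lra..]. }
      rewrite E, RInt_inv_sqr, Rinv_1 by lra.
      assert (0 < / b') by (apply Rinv_0_lt_compat; lra); nra. }
  unfold plus; simpl; lra.
Qed.

Definition gamma_log_kernel (m : nat) (s x : R) : R := gamma_kernel s x * ln x ^ m.

Definition gamma_log_moment (m : nat) (s : R) : R := RInt_gen (gamma_log_kernel m s) at_0 at_oo.

Lemma gamma_log_kernel_continuous m s x : 0 < x -> continuous (gamma_log_kernel m s) x.
Proof.
  intros Hx; apply ex_derive_continuous_R; unfold gamma_log_kernel, gamma_kernel, Rpower.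
  auto_derive; repeat split; lra.
Qed.

(* [x^(2d) + x^(-2d)] dominates [exp (2 d |ln x|)], which absorbs any power of [|ln x|]. *)
Definition gamma_envelope (s d x : R) : R := gamma_kernel (s + 2 * d) x + gamma_kernel (s - 2 * d) x.

Lemma gamma_envelope_continuous s d x : 0 < x -> continuous (gamma_envelope s d) x.
Proof.
  intros Hx; apply (continuous_plus (gamma_kernel _) (gamma_kernel _));
    apply gamma_kernel_continuous, Hx.
Qed.

Lemma ex_RInt_gen_gamma_envelope s d : 0 < 2 * d < s -> ex_RInt_gen (gamma_envelope s d) at_0 at_oo.
Proof.
  intros Hd.
  destruct (ex_RInt_gen_gamma_kernel (s + 2 * d)) as [l1 H1]; [lra|].
  destruct (ex_RInt_gen_gamma_kernel (s - 2 * d)) as [l2 H2]; [lra|].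
  exists (plus l1 l2); exact (is_RInt_gen_plus _ _ _ _ H1 H2).
Qed.

Lemma gamma_kernel_log_le_envelope j d s x : 0 < d -> 0 < x ->
  gamma_kernel s x * (Rabs (ln x) ^ j * exp (d * Rabs (ln x)))
  <= (INR j / d) ^ j * gamma_envelope s d x.
Proof.
  intros Hd Hx; set (y := ln x).
  assert (Hpow := pow_le_exp_mult j d (Rabs y) Hd (Rabs_pos y)).
  assert (Hexp : exp (d * Rabs y) * exp (d * Rabs y) <= exp (2 * d * y) + exp (- (2 * d * y))).
  { rewrite <- exp_plus; replace (d * Rabs y + d * Rabs y) with (Rabs (2 * d * y))
      by (rewrite Rabs_mult, (Rabs_pos_eq (2 * d)) by lra; ring).
    apply exp_Rabs_le. }
  assert (Hcoef : 0 <= (INR j / d) ^ j) by (apply pow_le, Rdiv_le_0_compat; [apply pos_INR | lra]).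
  assert (Henv : gamma_envelope s d x = gamma_kernel s x * (exp (2 * d * y) + exp (- (2 * d * y)))).
  { unfold gamma_envelope; replace (s - 2 * d) with (s + - (2 * d)) by ring.
    rewrite <- !gamma_kernel_mult_Rpower by easy; unfold Rpower; fold y.
    replace (- (2 * d) * y) with (- (2 * d * y)) by ring; ring. }
  rewrite Henv, (Rmult_comm ((INR j / d) ^ j)), Rmult_assoc.
  apply Rmult_le_compat_l; [left; apply gamma_kernel_pos|].
  pose proof (exp_pos (d * Rabs y)); nra.
Qed.

Lemma ex_RInt_gen_gamma_log_kernel m s : 0 < s -> ex_RInt_gen (gamma_log_kernel m s) at_0 at_oo.
Proof.
  intros Hs; set (d := s / 4).
  destruct (ex_RInt_gen_gamma_envelope s d) as [l Hl]; [unfold d; lra|].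
  apply ex_RInt_gen_dominated with (fun x => (INR m / d) ^ m * gamma_envelope s d x).
  - apply gamma_log_kernel_continuous.
  - intros x Hx; apply (continuous_scal_r _ (gamma_envelope s d)), gamma_envelope_continuous, Hx.
  - intros x Hx.
    apply Rle_trans with (2 := gamma_kernel_log_le_envelope m d s x ltac:(unfold d; lra) Hx).
    unfold gamma_log_kernel.
    rewrite Rabs_mult, <- RPow_abs, Rabs_pos_eq by (left; apply gamma_kernel_pos).
    apply Rmult_le_compat_l; [left; apply gamma_kernel_pos|].
    rewrite <- (Rmult_1_r (Rabs (ln x) ^ m)) at 1.
    apply Rmult_le_compat_l; [apply pow_le, Rabs_pos|].
    rewrite <- exp_0; apply exp_le_mono, Rmult_le_pos; [unfold d; lra | apply Rabs_pos].
  - exists ((INR m / d) ^ m * l); exact (is_RInt_gen_scal _ _ _ Hl).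
Qed.

Lemma is_RInt_gen_gamma_log_moment m s :
  0 < s -> is_RInt_gen (gamma_log_kernel m s) at_0 at_oo (gamma_log_moment m s).
Proof. intros Hs; exact (RInt_gen_correct _ (ex_RInt_gen_gamma_log_kernel m s Hs)). Qed.

Lemma gamma_log_kernel_taylor_le m s h d x : 0 < d -> Rabs h <= d -> 0 < x ->
  Rabs (gamma_log_kernel m (s + h) x - gamma_log_kernel m s x - h * gamma_log_kernel (S m) s x)
  <= h ^ 2 * ((INR (S (S m)) / d) ^ S (S m) * gamma_envelope s d x).
Proof.
  intros Hd Hh Hx; set (y := ln x).
  assert (E : gamma_log_kernel m (s + h) x - gamma_log_kernel m s x - h * gamma_log_kernel (S m) s x
              = gamma_kernel s x * y ^ m * (exp (h * y) - 1 - h * y)).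
  { unfold gamma_log_kernel; rewrite <- gamma_kernel_mult_Rpower by easy.
    unfold Rpower at 1; fold y; simpl; ring. }
  rewrite E, !Rabs_mult, <- RPow_abs, (Rabs_pos_eq (gamma_kernel s x)) by (left; apply gamma_kernel_pos).
  assert (Hexp : Rabs (exp (h * y) - 1 - h * y) <= h ^ 2 * (Rabs y ^ 2 * exp (d * Rabs y))).
  { apply Rle_trans with (1 := exp_sub_taylor1_le (h * y)).
    rewrite Rpow_mult_distr, pow2_abs, Rmult_assoc, <- (pow2_abs y).
    apply Rmult_le_compat_l; [apply pow2_ge_0|].
    apply Rmult_le_compat_l; [apply pow2_ge_0|].
    apply exp_le_mono; rewrite Rabs_mult; apply Rmult_le_compat_r; [apply Rabs_pos | easy]. }
  assert (Henv := gamma_kernel_log_le_envelope (S (S m)) d s x Hd Hx); fold y in Henv.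
  replace (Rabs y ^ S (S m)) with (Rabs y ^ m * Rabs y ^ 2) in Henv by (simpl; ring).
  apply Rle_trans with (gamma_kernel s x * Rabs y ^ m * (h ^ 2 * (Rabs y ^ 2 * exp (d * Rabs y)))).
  - apply Rmult_le_compat_l; [|easy].
    apply Rmult_le_pos; [left; apply gamma_kernel_pos | apply pow_le, Rabs_pos].
  - pose proof (pow2_ge_0 h); nra.
Qed.

Lemma is_derive_of_quadratic_remainder (f : R -> R) s l C r : 0 < r ->
  (forall h, Rabs h <= r -> Rabs (f (s + h) - f s - h * l) <= C * h ^ 2) -> is_derive f s l.
Proof.
  intros Hr Hrem; apply is_derive_Reals; intros eps Heps.
  assert (HC : 0 <= C).
  { specialize (Hrem r ltac:(rewrite Rabs_pos_eq; lra)).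
    pose proof (Rabs_pos (f (s + r) - f s - r * l)); pose proof (pow_lt r 2 Hr); nra. }
  assert (Hdel : 0 < Rmin r (eps / (C + 1)))
    by (apply Rmin_glb_lt; [easy | apply Rdiv_lt_0_compat; lra]).
  exists (mkposreal _ Hdel); intros h Hh0 Hh; simpl in Hh.
  pose proof (Rmin_l r (eps / (C + 1))); pose proof (Rmin_r r (eps / (C + 1))).
  assert (Hah : 0 < Rabs h) by (apply Rabs_pos_lt, Hh0).
  replace ((f (s + h) - f s) / h - l) with ((f (s + h) - f s - h * l) / h) by (field; easy).
  unfold Rdiv; rewrite Rabs_mult, Rabs_inv.
  apply Rle_lt_trans with (C * Rabs h).
  - apply (Rmult_le_reg_r (Rabs h)); [easy|].
    rewrite Rmult_assoc, Rinv_l, Rmult_1_r, Rmult_assoc by lra.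
    replace (Rabs h * Rabs h) with (h ^ 2) by (rewrite <- pow2_abs; ring).
    apply Hrem; lra.
  - apply Rle_lt_trans with (C * (eps / (C + 1))); [apply Rmult_le_compat_l; lra|].
    apply (Rmult_lt_reg_r (C + 1)); [lra|].
    replace (C * (eps / (C + 1)) * (C + 1)) with (eps * C) by (field; lra); nra.
Qed.

Lemma gamma_log_moment_remainder_le m s : 0 < s -> exists C, forall h, Rabs h <= s / 4 ->
  Rabs (gamma_log_moment m (s + h) - gamma_log_moment m s - h * gamma_log_moment (S m) s) <= C * h ^ 2.
Proof.
  intros Hs; set (d := s / 4).
  destruct (ex_RInt_gen_gamma_envelope s d) as [l Hl]; [unfold d; lra|].
  exists ((INR (S (S m)) / d) ^ S (S m) * l); intros h Hh.
  assert (Hsh : 0 < s + h) by (apply Rabs_le_between in Hh; unfold d in Hh; lra).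
  rewrite (Rmult_comm _ (h ^ 2)).
  apply (RInt_gen_abs_le
    (fun x => gamma_log_kernel m (s + h) x - gamma_log_kernel m s x - h * gamma_log_kernel (S m) s x)
    (fun x => h ^ 2 * ((INR (S (S m)) / d) ^ S (S m) * gamma_envelope s d x))).
  - intros x Hx; apply gamma_log_kernel_taylor_le; unfold d in *; lra.
  - exact (is_RInt_gen_minus _ _ _ _
      (is_RInt_gen_minus _ _ _ _ (is_RInt_gen_gamma_log_moment m _ Hsh)
         (is_RInt_gen_gamma_log_moment m _ Hs))
      (is_RInt_gen_scal _ h _ (is_RInt_gen_gamma_log_moment (S m) _ Hs))).
  - exact (is_RInt_gen_scal _ (h ^ 2) _ (is_RInt_gen_scal _ _ _ Hl)).
Qed.

Lemma is_derive_gamma_log_moment m s :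
  0 < s -> is_derive (gamma_log_moment m) s (gamma_log_moment (S m) s).
Proof.
  intros Hs; destruct (gamma_log_moment_remainder_le m s Hs) as [C HC].
  apply (is_derive_of_quadratic_remainder _ _ _ C (s / 4)); [lra | exact HC].
Qed.

Lemma Gamma_eq_log_moment : Gamma = gamma_log_moment 0.
Proof.
  apply functional_extensionality; intros s; unfold Gamma, gamma_log_moment.
  f_equal; apply functional_extensionality; intros x.
  unfold gamma_log_kernel, gamma_kernel; simpl; ring.
Qed.

Lemma is_RInt_gen_Gamma s : 0 < s -> is_RInt_gen (gamma_kernel s) at_0 at_oo (Gamma s).
Proof. intros Hs; exact (RInt_gen_correct _ (ex_RInt_gen_gamma_kernel s Hs)). Qed.

Lemma Gamma_pos s : 0 < s -> 0 < Gamma s.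
Proof.
  intros Hs; apply Rlt_le_trans with (RInt (gamma_kernel s) 1 2).
  - apply RInt_gt_0; [lra | intros; apply gamma_kernel_pos | intros; apply gamma_kernel_continuous; lra].
  - apply RInt_le_RInt_gen; try lra.
    + apply gamma_kernel_continuous.
    + intros; left; apply gamma_kernel_pos.
    + apply is_RInt_gen_Gamma, Hs.
Qed.

(* The integrand of [l^2 I_0 + 2 l I_1 + I_2] is [gamma_kernel s x * (l + ln x)^2]. *)
Lemma gamma_log_moment_sqr_le s :
  0 < s -> gamma_log_moment 1 s ^ 2 <= gamma_log_moment 2 s * gamma_log_moment 0 s.
Proof.
  intros Hs; set (I0 := gamma_log_moment 0 s); set (I1 := gamma_log_moment 1 s).
  set (I2 := gamma_log_moment 2 s).
  assert (HI0 : 0 < I0) by (unfold I0; rewrite <- Gamma_eq_log_moment; apply Gamma_pos, Hs).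
  assert (Hquad : forall l, 0 <= l ^ 2 * I0 + 2 * l * I1 + I2).
  { intros l; apply (is_RInt_gen_ge0
      (fun x => l ^ 2 * gamma_log_kernel 0 s x + 2 * l * gamma_log_kernel 1 s x
                + gamma_log_kernel 2 s x)).
    - intros x Hx.
      replace (l ^ 2 * gamma_log_kernel 0 s x + 2 * l * gamma_log_kernel 1 s x + gamma_log_kernel 2 s x)
        with (gamma_kernel s x * (l + ln x) ^ 2) by (unfold gamma_log_kernel; ring).
      apply Rmult_le_pos; [left; apply gamma_kernel_pos | apply pow2_ge_0].
    - exact (is_RInt_gen_plus _ _ _ _
        (is_RInt_gen_plus _ _ _ _ (is_RInt_gen_scal _ _ _ (is_RInt_gen_gamma_log_moment 0 s Hs))
           (is_RInt_gen_scal _ _ _ (is_RInt_gen_gamma_log_moment 1 s Hs)))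
        (is_RInt_gen_gamma_log_moment 2 s Hs)). }
  specialize (Hquad (- I1 / I0)).
  replace ((- I1 / I0) ^ 2 * I0 + 2 * (- I1 / I0) * I1 + I2) with ((I2 * I0 - I1 ^ 2) / I0) in Hquad
    by (field; lra).
  apply Rmult_le_compat_r with (r := I0) in Hquad; [|lra].
  unfold Rdiv in Hquad; rewrite Rmult_0_l, Rmult_assoc, Rinv_l, Rmult_1_r in Hquad by lra; lra.
Qed.

Lemma gamma_kernel_lim_0 s : 1 < s -> filterlim (gamma_kernel s) at_0 (locally 0).
Proof.
  intros Hs; apply filterlim_locally; intros eps.
  eapply filter_imp; [|apply (at_right_0_interval (exp (ln eps / (s - 1)))), exp_pos].
  intros x Hx; apply ball_R_Rabs; rewrite Rminus_0_r, Rabs_pos_eq by (left; apply gamma_kernel_pos).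
  apply Rle_lt_trans with (1 := gamma_kernel_le_Rpower s x ltac:(lra)).
  rewrite <- (exp_ln eps) by apply cond_pos; apply exp_increasing.
  assert (ln x < ln eps / (s - 1)) by (rewrite <- (ln_exp (ln eps / (s - 1))); apply ln_increasing; lra).
  apply Rmult_lt_compat_l with (r := s - 1) in H; [|lra].
  replace ((s - 1) * (ln eps / (s - 1))) with (ln eps) in H by (field; lra); lra.
Qed.

Lemma gamma_kernel_lim_oo s : 0 < s + 1 -> filterlim (gamma_kernel s) at_oo (locally 0).
Proof.
  intros Hs; apply filterlim_locally; intros [eps Heps].
  set (K := Rpower (s + 1) (s + 1)); assert (HK : 0 < K) by apply exp_pos.
  exists (Rmax 1 (K / eps)); intros x Hx.
  pose proof (Rmax_l 1 (K / eps)); pose proof (Rmax_r 1 (K / eps)).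
  apply ball_R_Rabs; simpl; rewrite Rminus_0_r, Rabs_pos_eq by (left; apply gamma_kernel_pos).
  apply Rle_lt_trans with (1 := gamma_kernel_le_inv_sqr s x ltac:(lra) Hs); fold K.
  assert (K < eps * x) by (apply (Rmult_lt_reg_r (/ eps)); [apply Rinv_0_lt_compat, Heps|];
    replace (eps * x * / eps) with x by (field; lra); unfold Rdiv in *; lra).
  apply (Rmult_lt_reg_r (x ^ 2)); [nra|].
  unfold Rdiv; rewrite Rmult_assoc, Rinv_l, Rmult_1_r by nra; nra.
Qed.

Lemma is_derive_gamma_kernel s x :
  0 < x -> is_derive (gamma_kernel (s + 1)) x (s * gamma_kernel s x - gamma_kernel (s + 1) x).
Proof.
  intros Hx; rewrite <- (gamma_kernel_mult_Rpower s 1 x Hx), Rpower_1 by easy.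
  unfold gamma_kernel, Rpower; auto_derive; [easy|].
  replace (s + 1 - 1) with ((s - 1) + 1) by ring.
  rewrite Rmult_plus_distr_r, Rmult_1_l, exp_plus, exp_ln by easy; field; lra.
Qed.

(* Integration by parts: [s * gamma_kernel s - gamma_kernel (s + 1)] is the derivative of
   [gamma_kernel (s + 1)], which vanishes at both ends. *)
Lemma Gamma_succ s : 0 < s -> Gamma (s + 1) = s * Gamma s.
Proof.
  intros Hs; set (g := fun x => s * gamma_kernel s x - gamma_kernel (s + 1) x).
  assert (Hg : forall x, 0 < x -> Derive (gamma_kernel (s + 1)) x = g x)
    by (intros; apply is_derive_unique, is_derive_gamma_kernel; easy).
  assert (Hparts : is_RInt_gen (Derive (gamma_kernel (s + 1))) at_0 at_oo (0 - 0)).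
  { apply is_RInt_gen_Derive.
    - eapply filter_imp; [|exact eventually_0_1_oo]; intros [a b] Hab x Hx; simpl in *.
      rewrite Rmin_left in Hx by lra; eexists; apply is_derive_gamma_kernel; lra.
    - eapply filter_imp; [|exact eventually_0_1_oo]; intros [a b] Hab x Hx; simpl in *.
      rewrite Rmin_left in Hx by lra.
      apply continuous_ext_loc with g.
      + apply (filter_imp (fun y => 0 < y)); [intros; symmetry; auto | apply open_gt; lra].
      + apply (continuous_minus (fun x => s * gamma_kernel s x));
          [apply (continuous_scal_r s (gamma_kernel s))|];
          apply gamma_kernel_continuous; lra.
    - apply gamma_kernel_lim_0; lra.
    - apply gamma_kernel_lim_oo; lra. }
  assert (Hg_int : is_RInt_gen g at_0 at_oo (s * Gamma s - Gamma (s + 1)))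
    by exact (is_RInt_gen_minus _ _ _ _ (is_RInt_gen_scal _ s _ (is_RInt_gen_Gamma s Hs))
                (is_RInt_gen_Gamma (s + 1) ltac:(lra))).
  apply (is_RInt_gen_ext _ g) in Hparts.
  - apply (is_RInt_gen_unique (V := R_CompleteNormedModule)) in Hparts, Hg_int; simpl in *; lra.
  - eapply filter_imp; [|exact eventually_0_1_oo]; intros [a b] Hab x Hx; simpl in *.
    rewrite Rmin_left in Hx by lra; apply Hg; lra.
Qed.

Lemma is_derive_Gamma s : 0 < s -> is_derive Gamma s (gamma_log_moment 1 s).
Proof. rewrite Gamma_eq_log_moment; apply is_derive_gamma_log_moment. Qed.

Lemma digamma_eq s : 0 < s -> digamma s = gamma_log_moment 1 s / Gamma s.
Proof. intros Hs; unfold digamma; f_equal; apply is_derive_unique, is_derive_Gamma, Hs. Qed.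

Lemma is_derive_ln_Gamma s : 0 < s -> is_derive (fun u => ln (Gamma u)) s (digamma s).
Proof.
  intros Hs; rewrite digamma_eq by easy.
  exact (is_derive_comp ln Gamma s _ _ (is_derive_ln _ (Gamma_pos s Hs)) (is_derive_Gamma s Hs)).
Qed.

Lemma is_derive_digamma s : 0 < s -> is_derive digamma s
  ((gamma_log_moment 2 s * Gamma s - gamma_log_moment 1 s * gamma_log_moment 1 s) / Gamma s ^ 2).
Proof.
  intros Hs; apply (is_derive_ext_loc (fun u => gamma_log_moment 1 u / Gamma u)).
  - apply (filter_imp (fun u => 0 < u)); [intros; symmetry; apply digamma_eq; easy | apply open_gt, Hs].
  - apply is_derive_div; [apply is_derive_gamma_log_moment, Hs | apply is_derive_Gamma, Hs |].
    apply Rgt_not_eq, Gamma_pos, Hs.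
Qed.

Lemma derive_ge0_le (f df : R -> R) x y : 0 < x -> x <= y ->
  (forall z, 0 < z -> is_derive f z (df z)) -> (forall z, 0 < z -> 0 <= df z) -> f x <= f y.
Proof.
  intros Hx Hxy Hd Hpos.
  destruct (MVT_gen f x y df) as (c & Hc & E); rewrite ?Rmin_left, ?Rmax_right in * by lra.
  - intros z Hz; apply Hd; lra.
  - intros z Hz; apply continuity_pt_filterlim, ex_derive_continuous_R; eexists; apply Hd; lra.
  - pose proof (Hpos c ltac:(lra)); nra.
Qed.

Lemma digamma_le x y : 0 < x -> x <= y -> digamma x <= digamma y.
Proof.
  intros Hx Hxy; eapply derive_ge0_le; [exact Hx | exact Hxy | intros; apply is_derive_digamma; easy |].
  intros z Hz; pose proof (Gamma_pos z Hz); pose proof (gamma_log_moment_sqr_le z Hz).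
  apply Rdiv_le_0_compat; [rewrite Gamma_eq_log_moment in *; simpl in *; nra | apply pow_lt; easy].
Qed.

Lemma digamma_succ s : 0 < s -> digamma (s + 1) = digamma s + / s.
Proof.
  intros Hs.
  assert (Hshift : is_derive (fun u => ln (Gamma (u + 1))) s (digamma (s + 1))).
  { rewrite <- (scal_one (digamma (s + 1))).
    apply (is_derive_comp (fun u => ln (Gamma u)) (fun u => u + 1)); [apply is_derive_ln_Gamma; lra|].
    auto_derive; easy. }
  assert (Hprod : is_derive (fun u => ln (Gamma (u + 1))) s (/ s + digamma s)).
  { apply (is_derive_ext_loc (fun u => ln u + ln (Gamma u))).
    - apply (filter_imp (fun u => 0 < u)); [|apply open_gt, Hs].
      intros u Hu; rewrite Gamma_succ, ln_mult by (try apply Gamma_pos; easy); easy.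
    - apply (is_derive_plus ln); [apply is_derive_ln, Hs | apply is_derive_ln_Gamma, Hs]. }
  apply is_derive_unique in Hshift; apply is_derive_unique in Hprod; lra.
Qed.

Definition harmonic (n : nat) : R := sum_n_m (fun j : nat => / INR j) 1 n.

Lemma harmonic_succ n : harmonic (S n) = harmonic n + / INR (S n).
Proof. unfold harmonic; rewrite sum_n_Sm by lia; reflexivity. Qed.

Lemma digamma_nat_succ n : digamma (INR n + 1) = digamma 1 + harmonic n.
Proof.
  induction n as [|n IH].
  - unfold harmonic; rewrite sum_n_m_zero, Rplus_0_l by lia; unfold zero; simpl; ring.
  - pose proof (pos_INR n).
    rewrite S_INR, digamma_succ, IH, harmonic_succ, S_INR by lra; unfold zero; simpl; ring.
Qed.

Lemma digamma_le_ln_le x : 0 < x -> digamma x <= ln x <= digamma (x + 1).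
Proof.
  intros Hx.
  destruct (MVT_gen (fun u => ln (Gamma u)) x (x + 1) digamma) as (c & Hc & E);
    rewrite ?Rmin_left, ?Rmax_right in * by lra.
  - intros z Hz; apply is_derive_ln_Gamma; lra.
  - intros z Hz; apply continuity_pt_filterlim, (ex_derive_continuous_R (fun u => ln (Gamma u))).
    eexists; apply is_derive_ln_Gamma; lra.
  - rewrite Gamma_succ, ln_mult in E by (try apply Gamma_pos; lra).
    replace (ln x) with (digamma c) by lra.
    split; apply digamma_le; lra.
Qed.

Lemma euler_gamma_eq : euler_gamma = - digamma 1.
Proof.
  unfold euler_gamma; change (real (Lim_seq (fun n => harmonic n - ln (INR n))) = - digamma 1).
  rewrite (is_lim_seq_unique _ (- digamma 1)); [easy|].
  apply is_lim_seq_incr_1.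
  apply is_lim_seq_le_le with (fun _ => - digamma 1) (fun m => - digamma 1 + / INR (S m)).
  - intros m; pose proof (digamma_le_ln_le (INR (S m)) ltac:(apply lt_0_INR; lia)).
    pose proof (digamma_nat_succ m); pose proof (digamma_nat_succ (S m)); pose proof (harmonic_succ m).
    rewrite S_INR in *; lra.
  - apply is_lim_seq_const.
  - replace (Finite (- digamma 1)) with (Rbar_plus (- digamma 1) 0) by (simpl; f_equal; ring).
    apply is_lim_seq_plus'; [apply is_lim_seq_const|].
    apply (is_lim_seq_incr_1 (fun n => / INR n)).
    exact (is_lim_seq_inv INR p_infty is_lim_seq_INR ltac:(discriminate)).
Qed.

Definition k_gamma_kernel (k s x : R) : R := exp (- (Rpower x k) / k) * Rpower x (s - 1).

(* The substitution [y = x^k / k], [dy = x^(k-1) dx]. *)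
Lemma k_gamma_kernel_eq k s x : 0 < k -> 0 < x ->
  k_gamma_kernel k s x
  = Rpower x (k - 1) * (Rpower k (s / k - 1) * gamma_kernel (s / k) (Rpower x k / k)).
Proof.
  intros Hk Hx; unfold k_gamma_kernel, gamma_kernel, Rpower.
  rewrite ln_div, ln_exp by (try apply exp_pos; lra).
  replace (- exp (k * ln x) / k) with (- (exp (k * ln x) / k)) by (field; lra).
  rewrite <- !exp_plus; f_equal; field; lra.
Qed.

Lemma is_RInt_k_gamma_kernel k s a b : 0 < k -> 0 < a -> a <= b ->
  is_RInt (k_gamma_kernel k s) a b
    (RInt (fun y => Rpower k (s / k - 1) * gamma_kernel (s / k) y) (Rpower a k / k) (Rpower b k / k)).
Proof.
  intros Hk Ha Hab.
  apply (is_RInt_ext (fun x => scal (Rpower x (k - 1))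
           (Rpower k (s / k - 1) * gamma_kernel (s / k) (Rpower x k / k)))).
  - rewrite Rmin_left, Rmax_right by lra; intros x Hx; symmetry; apply k_gamma_kernel_eq; lra.
  - apply (is_RInt_comp (fun y => Rpower k (s / k - 1) * gamma_kernel (s / k) y)
           (fun x => Rpower x k / k) (fun x => Rpower x (k - 1)));
      rewrite Rmin_left, Rmax_right by lra; intros x Hx.
    + apply (continuous_scal_r _ (gamma_kernel (s / k))), gamma_kernel_continuous.
      apply Rdiv_lt_0_compat; [apply exp_pos | lra].
    + split; [|apply Rpower_continuous; lra].
      apply is_derive_Reals.
      replace (Rpower x (k - 1)) with (k * Rpower x (k - 1) * / k) by (field; lra).
      apply (derivable_pt_lim_scal_right (fun y => Rpower y k)), derivable_pt_lim_power; lra.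
Qed.

Lemma Rpower_div_lim_0 k : 1 <= k -> filterlim (fun x => Rpower x k / k) at_0 at_0.
Proof.
  intros Hk P [eps HP].
  assert (Heps : 0 < Rmin 1 eps) by (apply Rmin_glb_lt; [lra | apply cond_pos]).
  pose proof (Rmin_l 1 eps); pose proof (Rmin_r 1 eps).
  change (at_0 (fun x => P (Rpower x k / k))).
  apply (filter_imp (fun x => 0 < x < Rmin 1 eps)); [|apply at_right_0_interval, Heps].
  intros x Hx.
  assert (Hpos : 0 < Rpower x k / k) by (apply Rdiv_lt_0_compat; [apply exp_pos | lra]).
  assert (Hle : Rpower x k / k <= x).
  { apply Rle_trans with (Rpower x k).
    - apply (Rmult_le_reg_r k); [lra|]; unfold Rdiv; rewrite Rmult_assoc, Rinv_l by lra.
      apply Rmult_le_compat_l; [left; apply exp_pos | lra].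
    - unfold Rpower; rewrite <- (exp_ln x) at 2 by lra; apply exp_le_mono.
      assert (ln x < 0) by (rewrite <- ln_1; apply ln_increasing; lra); nra. }
  apply HP; [|easy].
  apply ball_R_Rabs; rewrite Rminus_0_r, Rabs_pos_eq; lra.
Qed.

Lemma Rpower_div_lim_oo k : 1 <= k -> filterlim (fun x => Rpower x k / k) at_oo at_oo.
Proof.
  intros Hk P [M HM].
  exists (Rmax 1 (k * M)); intros x Hx; apply HM.
  pose proof (Rmax_l 1 (k * M)); pose proof (Rmax_r 1 (k * M)).
  assert (x <= Rpower x k).
  { unfold Rpower; rewrite <- (exp_ln x) at 1 by lra; apply exp_le_mono.
    assert (0 < ln x) by (rewrite <- ln_1; apply ln_increasing; lra); nra. }
  apply (Rmult_lt_reg_r k); [lra|]; unfold Rdiv; rewrite Rmult_assoc, Rinv_l by lra; lra.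
Qed.

Lemma Gamma_k_eq k s : 1 <= k -> 0 < s -> Gamma_k k s = Rpower k (s / k - 1) * Gamma (s / k).
Proof.
  intros Hk Hs; unfold Gamma_k; apply (is_RInt_gen_unique (V := R_CompleteNormedModule)).
  assert (Hsk : 0 < s / k) by (apply Rdiv_lt_0_compat; lra).
  assert (HG : is_RInt_gen (fun y => Rpower k (s / k - 1) * gamma_kernel (s / k) y) at_0 at_oo
                 (Rpower k (s / k - 1) * Gamma (s / k)))
    by exact (is_RInt_gen_scal _ _ _ (is_RInt_gen_Gamma (s / k) Hsk)).
  intros P HP; destruct (HG P HP) as [Q Q' HQ HQ' HQQ'].
  apply Filter_prod with (fun a => 0 < a < 1 /\ Q (Rpower a k / k))
                         (fun b => 1 < b /\ Q' (Rpower b k / k)).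
  - apply filter_and; [apply at_right_0_interval; lra | exact (Rpower_div_lim_0 k Hk Q HQ)].
  - apply filter_and; [now exists 1 | exact (Rpower_div_lim_oo k Hk Q' HQ')].
  - intros a b [Ha HQa] [Hb HQb]; destruct (HQQ' _ _ HQa HQb) as (y & Hy & HPy).
    exists y; split; [|easy].
    apply (is_RInt_unique (V := R_CompleteNormedModule)) in Hy; simpl; rewrite <- Hy.
    apply is_RInt_k_gamma_kernel; lra.
Qed.

Lemma psi_k_eq k t : 1 <= k -> 0 < t -> psi_k k t = ln k / k + digamma (t / k) / k.
Proof.
  intros Hk Ht; unfold psi_k; apply is_derive_unique.
  apply (is_derive_ext_loc (fun s => (s / k - 1) * ln k + ln (Gamma (s / k)))).
  - apply (filter_imp (fun s => 0 < s)); [|apply open_gt, Ht].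
    intros s Hs; assert (0 < s / k) by (apply Rdiv_lt_0_compat; lra).
    rewrite Gamma_k_eq, ln_mult, ln_Rpower by (try apply exp_pos; try apply Gamma_pos; lra); easy.
  - assert (Htk : 0 < t / k) by (apply Rdiv_lt_0_compat; lra).
    replace (ln k / k + digamma (t / k) / k) with (ln k / k + / k * digamma (t / k)) by (field; lra).
    apply (is_derive_plus (fun s => (s / k - 1) * ln k)); [auto_derive; [easy | field; lra]|].
    apply (is_derive_comp (fun u => ln (Gamma u)) (fun s => s / k)); [apply is_derive_ln_Gamma, Htk|].
    auto_derive; [easy | field; lra].
Qed.

Theorem lemma3p5 (a b k t : R) (hb : 0 < b) (hab : b <= a) (hk : 1 <= k) (ht : 0 < t) :
  (k * a * euler_gamma - b * euler_gamma) / k + b / k * ln k + (a - b) / t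
    + a * digamma t - b * psi_k k t >= 0.
Proof.
  assert (Htk : 0 < t / k) by (apply Rdiv_lt_0_compat; lra).
  assert (Hdiv_le : forall x, 0 <= x -> x / k <= x).
  { intros x Hx; apply (Rmult_le_reg_r k); [lra|].
    unfold Rdiv; rewrite Rmult_assoc, Rinv_l by lra; nra. }
  assert (Hbk : 0 < b / k <= b) by (split; [apply Rdiv_lt_0_compat | apply Hdiv_le]; lra).
  assert (Hmono1 : digamma 1 <= digamma (t / k + 1)) by (apply digamma_le; lra).
  assert (Hmono2 : digamma (t / k + 1) <= digamma (t + 1))
    by (apply digamma_le; [|pose proof (Hdiv_le t)]; lra).
  set (X := digamma (t + 1) - digamma 1); set (Y := digamma (t / k + 1) - digamma 1).
  assert (E : (k * a * euler_gamma - b * euler_gamma) / k + b / k * ln k + (a - b) / t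
              + a * digamma t - b * psi_k k t = a * X - b / k * Y).
  { rewrite euler_gamma_eq, psi_k_eq by easy; unfold X, Y.
    rewrite (digamma_succ t), (digamma_succ (t / k)) by easy; field; lra. }
  rewrite E; assert (0 <= Y <= X) by (unfold X, Y; lra); nra.
Qed.
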